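(* Let $U$ be a Galois algebra over $\Gamma$ in $\mathcal{K}=(L*\mathfrak{M})^G$ with $\mathfrak{M}\cong\mathbb{Z}^n$. Then $GK\,U\geq GK\,\Gamma+n$.
   Context: $\mathsf{k}$ is an algebraically closed field of characteristic zero. Galois algebra setup: $\Gamma\subset U$ where $\Gamma$ is a finitely generated commutative $\mathsf{k}$-domain and $U$ is an associative algebra finitely generated over $\Gamma$; $K$ is the field of fractions of $\Gamma$; $L$ is a finite Galois extension of $K$ with Galois group $G$; $\mathfrak{M}\subset\operatorname{Aut}_{\mathsf{k}}L$ is a monoid with the separating property (if $m,m'\in\mathfrak{M}$ have the same restriction to $K$ then $m=m'$), and $G$ acts on $\mathfrak{M}$ by conjugation, hence on the skew monoid ring $L*\mathfrak{M}$. $U$ is a Galois algebra over $\Gamma$ if there is an embedding $U\hookrightarrow\mathcal{K}:=(L*\mathfrak{M})^G$ with $KU=UK=\mathcal{K}$. $GK$ is Gelfand–Kirillov dimension: $GK\,A=\sup_V\limsup_m\log(\dim V^m)/\log m$ over finite-dimensional subspaces $V\ni1$. *)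

From Stdlib Require List.
From HB Require Import structures.
From mathcomp Require Import all_boot all_order all_algebra.
From mathcomp Require Import boolp classical_sets reals ereal sequences exp.
Set Implicit Arguments. Unset Strict Implicit. Unset Printing Implicit Defensive.
Import Order.TTheory GRing.Theory Num.Theory.
Local Open Scope ring_scope.
Local Open Scope classical_set_scope.

Section GK.
Variables (k : fieldType) (A : algType k).

Definition kspan (S : set A) : set A :=
  [set x | exists ps : seq (k * A), (forall p, p \in ps -> S p.2) /\
     x = \sum_(p <- ps) p.1 *: p.2].

Definition lin_indep (ws : seq A) : Prop :=
  forall cs : seq k, size cs = size ws ->
    \sum_(i < size ws) cs`_i *: ws`_i = 0 -> forall i, (i < size ws)%N -> cs`_i = 0.

Definition kdim (R : realType) (V : set A) : \bar R :=
  ereal_sup [set ((size ws)%:R)%:E | ws in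
     [set ws : seq A | lin_indep ws /\ forall w, w \in ws -> V w]].

Definition spow (V : set A) (m : nat) : set A :=
  kspan [set x | exists vs : seq A, size vs = m /\
            (forall v, v \in vs -> V v) /\ x = \prod_(v <- vs) v].

Definition fd_sub1 (V : set A) : Prop :=
  (exists s : seq A, V = kspan [set x | x \in s]) /\ V 1.

Definition GKdim (R : realType) : \bar R :=
  ereal_sup [set limn_esup
     (fun m : nat => (ln (fine (kdim R (spow V m))) / ln (m%:R : R))%:E)
     | V in fd_sub1].

Inductive subalg_gen (S : set A) : A -> Prop :=
  | sag_base x : S x -> subalg_gen S x
  | sag_one : subalg_gen S 1
  | sag_add x y : subalg_gen S x -> subalg_gen S y -> subalg_gen S (x + y)
  | sag_mul x y : subalg_gen S x -> subalg_gen S y -> subalg_gen S (x * y)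
  | sag_scale (c : k) x : subalg_gen S x -> subalg_gen S (c *: x).
End GK.

Definition is_ring_aut (L : fieldType) (g : L -> L) : Prop :=
  [/\ forall x y, g (x + y) = g x + g y, forall x y, g (x * y) = g x * g y,
      g 1 = 1 & bijective g].

Section Galois.
Variables (k : fieldType) (L : fieldType) (iota : k -> L) (n : nat)
          (phi : 'rV[int]_n -> L -> L).
(* M = phi (Z^n), elements of L*M are finitely supported functions Z^n -> L,
   f corresponds to  \sum_a f a * phi a *)

Definition fin_supp (f : 'rV[int]_n -> L) : Prop :=
  exists s : seq 'rV[int]_n, forall a, f a != 0 -> a \in s.

Definition frac_field (Gam : Type) (j : Gam -> L) : set L :=
  [set x | exists a b, j b != 0 /\ x = j a / j b].

Definition galK (K : set L) (g : L -> L) : Prop :=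
  is_ring_aut g /\ forall x, K x -> g x = x.

Definition Kcal (K : set L) (f : 'rV[int]_n -> L) : Prop :=
  fin_supp f /\
  forall g, galK K g -> forall a b,
    (forall x, phi b (g x) = g (phi a x)) -> f b = g (f a).

Definition KU (K : set L) (U : Type) (u : U -> 'rV[int]_n -> L)
  (f : 'rV[int]_n -> L) : Prop :=
  exists ps : seq (L * U), (forall p, List.In p ps -> K p.1) /\
    forall a, f a = \sum_(p <- ps) p.1 * u p.2 a.

Definition UK (K : set L) (U : Type) (u : U -> 'rV[int]_n -> L)
  (f : 'rV[int]_n -> L) : Prop :=
  exists ps : seq (L * U), (forall p, List.In p ps -> K p.1) /\
    forall a, f a = \sum_(p <- ps) u p.2 a * phi a p.1.
End Galois.

From Stdlib Require List.
From HB Require Import structures.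
From mathcomp Require Import all_boot all_order all_algebra.
From mathcomp Require Import boolp classical_sets reals ereal sequences exp.
From mathcomp Require Import zify ring.
Import Order.TTheory GRing.Theory Num.Theory.
Set Implicit Arguments. Unset Strict Implicit. Unset Printing Implicit Defensive.
Local Open Scope ring_scope.
Local Open Scope classical_set_scope.

(* Write the elements of [L * M] as finitely supported functions [Z^n -> L].
   Choose an additive [lam : Z^n -> Z] and a point [p0] such that [p0] and
   every [p0 + e_l] are the unique [lam]-maximal points of their orbits under
   the conjugation action of [G] on [M = Z^n].  The indicator function of
   such an orbit is [G]-invariant, hence lies in [K U]; clearing denominators
   gives elements [y0], [y_l] of [U] whose supports have these points as
   [lam]-leading points.  If [V] is a finite-dimensional subspace of [Gamma]
   containing [1] and [W] is spanned by [V], [y0] and the [y_l], then the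
   products [v * prod_l y_l^(a_l) y0^(m - a_l)], for [v] in a basis of [V^m]
   and [0 <= a_l <= m], have distinct leading points, so they are
   independent, and they lie in [(W^(n+1))^m].  Hence
   [dim (W^(n+1))^m >= (m+1)^n dim V^m], and dividing logarithms by [ln m]
   gives [GK U >= GK Gamma + n]. *)

Lemma nth_map_ord (V : zmodType) p (f : 'I_p -> V) (i : 'I_p) :
  (map f (enum 'I_p))`_i = f i.
Proof. by rewrite (nth_map i) ?size_enum_ord // nth_ord_enum. Qed.

Section Span.
Variables (k : fieldType) (A : algType k).
Implicit Types (S T : set A) (x y : A).

Lemma kspan_ind S (P : A -> Prop) : P 0 -> (forall x y, P x -> P y -> P (x + y)) ->
  (forall c x, S x -> P (c *: x)) -> forall x, kspan S x -> P x.
Proof.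
move=> P0 PD PZ x [ps [Hps ->]]; elim: ps Hps => [|p ps IH] Hps.
  by rewrite big_nil.
rewrite big_cons; apply: PD; first by apply: PZ; apply: Hps; exact: mem_head.
by apply: IH => q qin; apply: Hps; rewrite in_cons qin orbT.
Qed.

Lemma kspan0 S : kspan S 0.
Proof. by exists [::]; split => //; rewrite big_nil. Qed.

Lemma kspan_base S x : S x -> kspan S x.
Proof.
move=> Sx; exists [:: (1, x)]; split; first by move=> p; rewrite inE => /eqP ->.
by rewrite big_seq1 scale1r.
Qed.

Lemma kspanD S x y : kspan S x -> kspan S y -> kspan S (x + y).
Proof.
move=> [p1 [H1 ->]] [p2 [H2 ->]]; exists (p1 ++ p2); split; last by rewrite big_cat.
by move=> p; rewrite mem_cat => /orP[]; [apply: H1|apply: H2].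
Qed.

Lemma kspanZ S c x : kspan S x -> kspan S (c *: x).
Proof.
move=> [ps [H ->]]; exists [seq (c * p.1, p.2) | p <- ps]; split.
  by move=> p /mapP[q qin ->]; exact: (H q qin).
by rewrite big_map scaler_sumr; apply: eq_bigr => p _; rewrite scalerA.
Qed.

Lemma sub_kspan S T : S `<=` T -> kspan S `<=` kspan T.
Proof.
move=> ST; apply: kspan_ind; [exact: kspan0|move=> *; exact: kspanD|].
by move=> c x Sx; apply: kspanZ; apply: kspan_base; apply: ST.
Qed.

Lemma kspan_idem S : kspan (kspan S) `<=` kspan S.
Proof. by apply: kspan_ind; [exact: kspan0|move=> *; exact: kspanD|move=> *; exact: kspanZ]. Qed.

Lemma kspan_mul S T x y : kspan S x -> kspan T y ->
  kspan [set z | exists a b, [/\ S a, T b & z = a * b]] (x * y).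
Proof.
move=> Hx Hy; move: x Hx; apply: kspan_ind.
- by rewrite mul0r; apply: kspan0.
- by move=> x1 x2 H1 H2; rewrite mulrDl; apply: kspanD.
move=> c a Sa; rewrite -scalerAl; apply: kspanZ.
move: y Hy; apply: kspan_ind.
- by rewrite mulr0; apply: kspan0.
- by move=> y1 y2 H1 H2; rewrite mulrDr; apply: kspanD.
by move=> c' b Tb; rewrite -scalerAr; apply: kspanZ; apply: kspan_base; exists a, b.
Qed.

Lemma kspan_seq_coord (t : seq A) x : kspan [set y | y \in t] x ->
  exists c : 'I_(size t) -> k, x = \sum_(i < size t) c i *: t`_i.
Proof.
move: x; apply: kspan_ind.
- by exists (fun _ => 0); rewrite big1 // => i _; rewrite scale0r.
- move=> y z [c1 ->] [c2 ->]; exists (fun i => c1 i + c2 i).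
  by rewrite -big_split; apply: eq_bigr => i _; rewrite scalerDl.
move=> c y /= yin; have yi : (index y t < size t)%N by rewrite index_mem.
exists (fun i => if i == Ordinal yi then c else 0).
rewrite (bigD1 (Ordinal yi)) //= eqxx nth_index // big1 ?addr0 // => i /negbTE ->.
by rewrite scale0r.
Qed.

Lemma lin_indep_nil : lin_indep ([::] : seq A).
Proof. by move=> cs _ _ i. Qed.

(* The coordinates of [ws] in [t] form a matrix with more rows than columns;
   a vector in its left kernel gives a linear relation among the [ws]. *)
Lemma lin_indep_size_le (t ws : seq A) : lin_indep ws ->
  (forall w, w \in ws -> kspan [set y | y \in t] w) -> (size ws <= size t)%N.
Proof.
move=> ws_indep ws_span; rewrite leqNgt; apply/negP => lt_t_ws.
pose p := size ws; pose q := size t.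
have coord (i : 'I_p) : exists c : 'I_q -> k, ws`_i = \sum_(j < q) c j *: t`_j.
  by apply: kspan_seq_coord; apply: ws_span; apply: mem_nth.
have [C HC] := choice coord.
pose M := \matrix_(i < p, j < q) C i j.
have : kermx M != 0.
  rewrite kermx_eq0 /row_free; apply/negP => /eqP rkM.
  by have := rank_leq_col M; rewrite rkM leqNgt lt_t_ws.
move=> /rowV0Pn[v /sub_kermxP vM /negP]; apply.
pose cs := map (v 0) (enum 'I_p).
have cs_ws : \sum_(i < size ws) cs`_i *: ws`_i = 0.
  transitivity (\sum_(i < p) \sum_(j < q) (v 0 i * C i j) *: t`_j).
    apply: eq_bigr => i _; rewrite nth_map_ord HC scaler_sumr.
    by apply: eq_bigr => j _; rewrite scalerA.
  rewrite exchange_big /=; apply: big1 => j _; rewrite -scaler_suml.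
  have := congr1 (fun m : 'M_(1, q) => m 0 j) vM; rewrite !mxE => vMj.
  suff -> : \sum_(i < p) v 0 i * C i j = 0 by rewrite scale0r.
  by apply: etrans vMj; apply: eq_bigr => i _; rewrite mxE.
apply/eqP/rowP => i; rewrite mxE.
have size_cs : size cs = size ws by rewrite size_map size_enum_ord.
by have := ws_indep cs size_cs cs_ws i (ltn_ord i); rewrite nth_map_ord.
Qed.

Lemma lin_indep_fintype (I : finType) (f : I -> A) :
  (forall c : I -> k, \sum_i c i *: f i = 0 -> forall i, c i = 0) ->
  lin_indep [seq f i | i <- enum I].
Proof.
move=> f_indep cs _ cs_f i lt_i.
have size_f : size [seq f i | i <- enum I] = #|I| by rewrite size_map -cardE.
pose c := fun z : I => cs`_(enum_rank z).
have c_f : \sum_(z : I) c z *: f z = 0.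
  apply: etrans _ cs_f; rewrite (reindex (@enum_val _ I)); last first.
    by apply: onW_bij; exact: enum_val_bij.
  rewrite -(big_mkord xpredT (fun j => cs`_j *: [seq f i | i <- enum I]`_j)).
  rewrite size_f big_mkord; apply: eq_bigr => j _.
  by rewrite /c enum_valK nth_image.
have lt_i' : (i < #|I|)%N by rewrite -size_f.
by have := f_indep c c_f (enum_val (Ordinal lt_i')); rewrite /c enum_valK.
Qed.

End Span.

Section Kdim.
Variables (k : fieldType) (A : algType k) (R : realType).
Local Open Scope ereal_scope.

Lemma kdim_ge (V : set A) ws : lin_indep ws -> (forall w, w \in ws -> V w) ->
  ((size ws)%:R)%:E <= kdim R V.
Proof. by move=> ws_indep wsV; apply: ereal_sup_ubound; exists ws. Qed.

Lemma kdim_ge1 (V : set A) : V 1%R -> 1 <= kdim R V.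
Proof.
move=> V1; have one_indep : lin_indep [:: (1 : A)%R].
  move=> cs _; rewrite big_ord1 => /eqP; rewrite scaler_eq0 oner_eq0 orbF => /eqP c0.
  by case=> // _; exact: c0.
by apply: kdim_ge one_indep _ => w; rewrite inE => /eqP ->.
Qed.

Lemma kdim_spanned (V : set A) (t : seq A) : V `<=` kspan [set y | y \in t] ->
  exists ws, [/\ lin_indep ws, (forall w, w \in ws -> V w) &
                 kdim R V = ((size ws)%:R)%:E].
Proof.
move=> Vt.
pose P m := `[< exists ws, [/\ lin_indep ws, forall w, w \in ws -> V w & size ws = m] >].
have P0 : exists m, P m.
  by exists 0%N; apply/asboolP; exists [::]; split => //; exact: lin_indep_nil.
have Pt m : P m -> (m <= size t)%N.
  by move=> /asboolP[ws [ws_indep wsV <-]]; apply: lin_indep_size_le ws_indep _ => w /wsV /Vt.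
case: (ex_maxnP P0 Pt) => m /asboolP[ws [ws_indep wsV size_ws]] maxm.
exists ws; split => //; apply/eqP; rewrite eq_le kdim_ge // andbT.
apply: ge_ereal_sup => _ [ws' [ws'_indep ws'V] <-]; rewrite lee_fin ler_nat size_ws.
by apply: maxm; apply/asboolP; exists ws'.
Qed.

End Kdim.

Section Spow.
Variables (k : fieldType) (A : algType k).
Implicit Types (V W : set A) (x y : A).

Lemma spow_word V (vs : seq A) m : size vs = m -> (forall v, v \in vs -> V v) ->
  spow V m (\prod_(v <- vs) v).
Proof. by move=> size_vs vsV; apply: kspan_base; exists vs. Qed.

Lemma spow_nil V : spow V 0 1.
Proof. by rewrite -(big_nil 1 *%R xpredT id); exact: spow_word. Qed.

Lemma spow0 V m : spow V m 0.
Proof. exact: kspan0. Qed.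

Lemma spowD V m x y : spow V m x -> spow V m y -> spow V m (x + y).
Proof. exact: kspanD. Qed.

Lemma spowZ V m c x : spow V m x -> spow V m (c *: x).
Proof. exact: kspanZ. Qed.

Lemma spowM V a b x y : spow V a x -> spow V b y -> spow V (a + b) (x * y).
Proof.
move=> Hx Hy; apply: sub_kspan (kspan_mul Hx Hy) => z [_ [_ [[vs [size_vs [vsV ->]]]
  [ws [size_ws [wsV ->]]] ->]]].
exists (vs ++ ws); split; first by rewrite size_cat size_vs size_ws.
split; last by rewrite big_cat.
by move=> v; rewrite mem_cat => /orP[]; [apply: vsV|apply: wsV].
Qed.

Lemma spow1 V x : V x -> spow V 1 x.
Proof.
move=> Vx; have -> : x = \prod_(v <- [:: x]) v by rewrite big_seq1.
by apply: spow_word => // v; rewrite inE => /eqP ->.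
Qed.

Lemma spowX V x m : V x -> spow V m (x ^+ m).
Proof.
move=> Vx; elim: m => [|m IH]; first by rewrite expr0; exact: spow_nil.
by rewrite exprS -add1n; apply: spowM => //; apply: spow1.
Qed.

Lemma spow_one V m : V 1 -> spow V m 1.
Proof. by move=> V1; rewrite -(expr1n A m); apply: spowX. Qed.

Lemma spow_prod V m p (F : 'I_p -> A) :
  (forall i, spow V m (F i)) -> spow V (p * m) (\prod_(i < p) F i).
Proof.
elim: p F => [|p IH] F FV; first by rewrite big_ord0; exact: spow_nil.
rewrite big_ord_recr /= mulSn addnC; apply: spowM => //.
by apply: IH => i; apply: FV.
Qed.

Lemma spow_spow V a m x : spow V (a * m) x -> spow (spow V a) m x.
Proof.
elim: m x => [|m IH] x.
  rewrite muln0; apply: sub_kspan => z [vs [/size0nil -> [_ ->]]].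
  by exists [::].
rewrite mulnS; apply: kspan_ind; [exact: spow0|by move=> *; apply: spowD|].
move=> c z [vs [size_vs [vsV ->]]]; apply: spowZ.
rewrite -(cat_take_drop a vs) big_cat -add1n; apply: spowM.
  apply: spow1; apply: spow_word; first by rewrite size_takel // size_vs leq_addr.
  by move=> v /mem_take; apply: vsV.
apply: IH; apply: spow_word; first by rewrite size_drop size_vs addKn.
by move=> v /mem_drop; apply: vsV.
Qed.

Fixpoint words (t : seq A) m : seq (seq A) :=
  if m is m'.+1 then [seq x :: w | x <- t, w <- words t m'] else [:: [::]].

Definition word_prods (t : seq A) m := [seq \prod_(v <- w) v | w <- words t m].

Lemma wordsP t m w : w \in words t m -> size w = m /\ forall v, v \in w -> v \in t.
Proof.
elim: m w => [|m IH] w /=; first by rewrite inE => /eqP ->.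
move=> /allpairsP[[x w'] [/= xt w'_words ->]]; have [size_w' w't] := IH _ w'_words.
split; first by rewrite /= size_w'.
by move=> v; rewrite inE => /orP[/eqP ->|/w't].
Qed.

Lemma spow_span_seq (t : seq A) m :
  spow (kspan [set y | y \in t]) m = kspan [set y | y \in word_prods t m].
Proof.
apply/seteqP; split => x; last first.
  move=> Hx; apply: kspan_idem; apply: sub_kspan Hx => z /mapP[w /wordsP[size_w wt] ->].
  by apply: spow_word => // v /wt vt; apply: kspan_base.
apply: kspan_ind x; [exact: kspan0|by move=> *; apply: kspanD|].
move=> c z [vs [<- [vs_t ->]]]; apply: kspanZ.
elim: vs vs_t => [|v vs IH] vs_t; first by apply: kspan_base; exact: mem_head.
rewrite big_cons.
have vt : kspan [set y | y \in t] v by apply: vs_t; exact: mem_head.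
have := kspan_mul vt (IH (fun w wvs => vs_t w (mem_behead (s := v :: vs) wvs))).
apply: sub_kspan => _ [a [_ [/= at_ /mapP[w w_words ->] ->]]].
have -> : a * \prod_(v <- w) v = \prod_(v <- a :: w) v by rewrite big_cons.
by apply: map_f; exact: allpairs_f.
Qed.

End Spow.

Section LRMorphism.
Variables (k : fieldType) (A B : algType k) (f : {lrmorphism A -> B}).

Lemma kspan_lrmorph (S : set A) (T : set B) : (forall x, S x -> T (f x)) ->
  forall x, kspan S x -> kspan T (f x).
Proof.
move=> ST; apply: kspan_ind.
- by rewrite raddf0; apply: kspan0.
- by move=> x y Hx Hy; rewrite raddfD; apply: kspanD.
by move=> c x Sx; rewrite linearZ; apply: kspanZ; apply: kspan_base; apply: ST.
Qed.

Lemma spow_lrmorph (V : set A) (W : set B) m : (forall x, V x -> W (f x)) ->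
  forall x, spow V m x -> spow W m (f x).
Proof.
move=> VW; apply: kspan_lrmorph => _ [vs [size_vs [vsV ->]]].
exists (map f vs); split; first by rewrite size_map.
split; last by rewrite rmorph_prod big_map.
by move=> _ /mapP[v vs_v ->]; apply: VW; apply: vsV.
Qed.

End LRMorphism.

Section Moments.
Variable n : nat.
Implicit Types (t : int) (x d : 'rV[int]_n).

Definition moment t x : int := \sum_(l < n) x 0 l * t ^+ l.

Fact moment_is_zmod_morphism t : zmod_morphism (moment t).
Proof. by move=> x y; rewrite /moment -sumrB; apply: eq_bigr => l _; rewrite !mxE mulrBl. Qed.

HB.instance Definition _ t :=
  GRing.isZmodMorphism.Build _ _ (moment t) (moment_is_zmod_morphism t).

Definition powers_row t : 'rV[int]_n := \row_l t ^+ l.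

(* [moment t d] is the value at [t] of the polynomial with coefficients [d];
   a nonzero polynomial has finitely many integer roots. *)
Lemma exists_moment_neq0 (ds : seq 'rV[int]_n) :
  (forall d, d \in ds -> d != 0) -> exists t, forall d, d \in ds -> moment t d != 0.
Proof.
move=> ds_neq0.
pose p d : {poly int} := \poly_(i < n) (map (d 0) (enum 'I_n))`_i.
have p_neq0 d : d \in ds -> p d != 0.
  move=> /ds_neq0; apply: contraNneq => pd0; apply/eqP/rowP => i; rewrite mxE.
  have := congr1 (fun q : {poly int} => q`_i) pd0.
  by rewrite /= coef_poly ltn_ord coef0 nth_map_ord.
pose P := \prod_(d <- ds) p d.
have P_neq0 : P != 0 by rewrite prodf_seq_neq0; apply/allP => d /p_neq0.
pose rs := [seq i%:Z | i <- iota 0 (size P)].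
have uniq_rs : uniq rs by rewrite map_inj_uniq ?iota_uniq // => a b [].
have : ~~ all (root P) rs.
  apply/negP => rsP; have := max_poly_roots P_neq0 rsP uniq_rs.
  by rewrite size_map size_iota ltnn.
move=> /allPn[t _ Pt_neq0]; exists t => d d_ds.
move: Pt_neq0; rewrite /root horner_prod prodf_seq_neq0 => /allP /(_ d d_ds) /=.
by rewrite horner_poly; under eq_bigr do rewrite nth_map_ord.
Qed.

Lemma exists_moment_inj (xs : seq 'rV[int]_n) :
  exists t, {in xs &, injective (moment t)}.
Proof.
pose ds := [seq pr.1 - pr.2 | pr <- [seq pr <- [seq (x, y) | x <- xs, y <- xs] | pr.1 != pr.2]].
have [|t Ht] := @exists_moment_neq0 ds.
  by move=> d /mapP[[x y] /=]; rewrite mem_filter /= => /andP[xy _] ->; rewrite subr_eq0.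
exists t => x y xs_x xs_y; apply: contra_eq => xy; rewrite -subr_eq0 -raddfB.
apply: Ht; apply/mapP; exists (x, y) => //.
by rewrite mem_filter /= xy (allpairs_f pair xs_x xs_y).
Qed.

Lemma additive_row_expand (V : zmodType) (D : {additive 'rV[int]_n -> V}) x :
  D x = \sum_(i < n) D (delta_mx 0 i) *~ x 0 i.
Proof.
rewrite {1}(row_sum_delta x) raddf_sum; apply: eq_bigr => i _.
by rewrite -raddfMz -scaler_int intz.
Qed.

Lemma additive_powers_row m (D : {additive 'rV[int]_n -> 'rV[int]_m}) t c :
  D (powers_row t) 0 c = moment t (\row_l D (delta_mx 0 l) 0 c).
Proof.
rewrite additive_row_expand summxE; apply: eq_bigr => l _.
by rewrite -scaler_int !mxE intz mulrC.
Qed.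

Lemma additive_neq0_witness m (D : {additive 'rV[int]_n -> 'rV[int]_m}) x :
  D x != 0 -> exists2 d, d != 0 & forall t, moment t d != 0 -> D (powers_row t) != 0.
Proof.
move=> Dx; have /existsP[l Dl] : [exists l, D (delta_mx 0 l) != 0].
  apply: contraNT Dx => /existsPn Dl0; rewrite additive_row_expand big1 // => l _.
  by rewrite (eqP (negbNE (Dl0 l))) mul0rz.
have /existsP[c Dlc] : [exists c, D (delta_mx 0 l) 0 c != 0].
  apply: contraNT Dl => /existsPn Dlc0; apply/eqP/rowP => c.
  by rewrite mxE; apply/eqP/negbNE.
exists (\row_l' D (delta_mx 0 l') 0 c).
  by apply/eqP => /rowP /(_ l) /eqP; rewrite !mxE; exact/negP.
move=> t; rewrite -additive_powers_row; apply: contraNneq => ->.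
by rewrite mxE.
Qed.

Lemma exists_powers_row_neq0 m (I : finType) (D : I -> {additive 'rV[int]_n -> 'rV[int]_m}) :
  exists t, forall i, (exists x, D i x != 0) -> D i (powers_row t) != 0.
Proof.
have witness i : exists d, (exists x, D i x != 0) ->
    d != 0 /\ forall t, moment t d != 0 -> D i (powers_row t) != 0.
  case: (pselect (exists x, D i x != 0)) => [[x /additive_neq0_witness[d]]|]; last by exists 0.
  by exists d.
have [d Hd] := choice witness.
pose ds := [seq d i | i <- enum I & `[< exists x, D i x != 0 >]].
have [|t Ht] := @exists_moment_neq0 ds.
  by move=> d' /mapP[i]; rewrite mem_filter => /andP[/asboolP /Hd[nz _] _] ->.
exists t => i Di; apply: (Hd i Di).2; apply: Ht; apply: map_f.
by rewrite mem_filter mem_enum andbT; apply/asboolP.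
Qed.

End Moments.

Section Limsup.
Variable R : realType.
Local Open Scope ereal_scope.

Lemma ereal_sup_addr_le (S : set (\bar R)) (c : R) y :
  (forall x, S x -> x + c%:E <= y) -> ereal_sup S + c%:E <= y.
Proof.
move=> Sy; rewrite -leeBrDr //; apply: ge_ereal_sup => x Sx.
by rewrite leeBrDr //; exact: Sy.
Qed.

Lemma limn_esup_addr_le (r s : (\bar R)^nat) (c : R) N :
  (forall m, (N <= m)%N -> r m + c%:E <= s m) -> limn_esup r + c%:E <= limn_esup s.
Proof.
move=> rs; rewrite !limn_esup_lim.
have inf_esups (v : (\bar R)^nat) : limn (esups v) = ereal_inf (range (esups v)).
  by apply/cvg_lim => //; exact: cvg_esups_inf.
rewrite !inf_esups; apply: le_ereal_inf_tmp => _ [m _ <-].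
pose m' := maxn m N.
apply: (@le_trans _ _ (esups r m' + c%:E)).
  by apply: leeD2r; apply: ereal_inf_lbound; exists m'.
apply: (@le_trans _ _ (esups s m')); last by apply: nonincreasing_esups; rewrite leq_maxl.
apply: ereal_sup_addr_le => _ [i /= m'i <-]; apply: le_trans (rs i _) _.
  by apply: leq_trans m'i; rewrite leq_maxr.
by apply: ereal_sup_ubound; exists i.
Qed.

End Limsup.

Lemma ln_ratio_addn (R : realType) (d D m p : nat) : (0 < d)%N -> (2 <= m)%N ->
  (d * m.+1 ^ p <= D)%N -> ln (d%:R : R) / ln m%:R + p%:R <= ln (D%:R : R) / ln m%:R.
Proof.
move=> d_gt0 m_ge2 dD.
have lnm_gt0 : 0 < ln (m%:R : R) by apply: ln_gt0; rewrite ltr1n.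
have D_gt0 : (0 < D)%N by apply: leq_trans dD; rewrite muln_gt0 d_gt0 expn_gt0.
rewrite ler_pdivlMr // mulrDl divfK ?gt_eqF // mulr_natl.
have lnD : ln (d%:R * m.+1%:R ^+ p : R) <= ln (D%:R : R).
  rewrite ler_ln ?posrE ?mulr_gt0 ?exprn_gt0 ?ltr0n //.
  by rewrite -natrX -natrM ler_nat.
rewrite lnM ?posrE ?exprn_gt0 ?ltr0n // lnXn ?ltr0n // in lnD.
apply: le_trans lnD; rewrite lerD2l; apply: ler_wMn2r.
by rewrite ler_ln ?posrE ?ltr0n ?ler_nat // (leq_trans _ m_ge2).
Qed.

Lemma List_In_nth (T : Type) (x0 : T) (s : seq T) x : List.In x s ->
  exists2 i, (i < size s)%N & nth x0 s i = x.
Proof.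
elim: s => [|y s IH] //= [->|/IH[i lt_i_s <-]]; first by exists 0%N.
by exists i.+1.
Qed.

Section GaloisGroup.
Variables (L : fieldType) (K : set L).
Implicit Types g h : L -> L.

Lemma galK_0 g : galK K g -> g 0 = 0.
Proof. by move=> [[gD _ _ _] _]; apply: (@addrI _ (g 0)); rewrite addr0 -gD addr0. Qed.

Lemma galK_1 g : galK K g -> g 1 = 1.
Proof. by move=> [[_ _ g1 _] _]. Qed.

Lemma galK_eqfun g h : galK K g -> g =1 h -> galK K h.
Proof.
move=> [[gD gM g1 [g' g'K Kg']] gK] gh; split; first split.
- by move=> x y; rewrite -!gh.
- by move=> x y; rewrite -!gh.
- by rewrite -gh.
- by exists g' => x; rewrite -gh ?g'K ?Kg'.
by move=> x Kx; rewrite -gh gK.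
Qed.

Lemma galK_id : galK K id.
Proof. by split; [split => //; exists id|]. Qed.

Lemma galK_comp g h : galK K g -> galK K h -> galK K (g \o h).
Proof.
move=> [[gD gM g1 gB] gK] [[hD hM h1 hB] hK]; split; first split.
- by move=> x y /=; rewrite hD gD.
- by move=> x y /=; rewrite hM gM.
- by rewrite /= h1 g1.
- exact: bij_comp.
by move=> x Kx /=; rewrite hK ?gK.
Qed.

Lemma galK_inv g : galK K g -> exists g', [/\ galK K g', cancel g g' & cancel g' g].
Proof.
move=> [[gD gM g1 [g' gK' Kg']] gK]; exists g'; split => //; split; first split.
- by move=> x y; apply: (can_inj gK'); rewrite gD !Kg'.
- by move=> x y; apply: (can_inj gK'); rewrite gM !Kg'.
- by apply: (can_inj gK'); rewrite g1 Kg'.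
- by exists g.
by move=> x Kx; apply: (can_inj gK'); rewrite Kg' gK.
Qed.

End GaloisGroup.

Section GaloisAlgebra.
Variables (R : realType) (k L : fieldType) (n : nat) (phi : 'rV[int]_n -> L -> L).
Variables (Gam : comAlgType k) (U : algType k) (e : {lrmorphism Gam -> U}).
Variables (u : U -> 'rV[int]_n -> L) (j : Gam -> L).
Hypothesis e_inj : injective e.
Hypothesis phi_aut : forall a, is_ring_aut (phi a).
Hypothesis phi0 : forall x, phi 0 x = x.
Hypothesis u_inj : injective u.
Hypothesis u_fin : forall v, fin_supp (u v).
Hypothesis u1 : forall a, u 1 a = if a == 0 then 1 else 0.
Hypothesis uD : forall v w a, u (v + w) a = u v a + u w a.
Hypothesis uM : forall v w (s : seq 'rV[int]_n), uniq s ->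
  (forall a, u v a != 0 -> a \in s) ->
  forall c, u (v * w) c = \sum_(a <- s) u v a * phi a (u w (c - a)).
Hypothesis u_Gam : forall g a, u (e g) a = if a == 0 then j g else 0.

Lemma u0 a : u 0 a = 0.
Proof. by apply: (@addrI _ (u 0 a)); rewrite addr0 -uD addr0. Qed.

Lemma u_sum (I : Type) (r : seq I) (F : I -> U) a :
  u (\sum_(i <- r) F i) a = \sum_(i <- r) u (F i) a.
Proof.
elim: r => [|i r IH]; first by rewrite !big_nil u0.
by rewrite !big_cons uD IH.
Qed.

Lemma u_supp v : exists2 s, uniq s & forall a, u v a != 0 -> a \in s.
Proof.
have [s Hs] := u_fin v; exists (undup s); first exact: undup_uniq.
by move=> a /Hs; rewrite mem_undup.
Qed.

Lemma phi_at0 a : phi a 0 = 0.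
Proof.
have [phi_add _ _ _] := phi_aut a.
by apply: (@addrI _ (phi a 0)); rewrite addr0 -phi_add addr0.
Qed.

Lemma phi_eq0 a x : (phi a x == 0) = (x == 0).
Proof.
have [_ _ _ /bij_inj phi_inj] := phi_aut a.
by rewrite -[X in _ == X](phi_at0 a) (inj_eq phi_inj).
Qed.

Lemma u_Gam_mul g w c : u (e g * w) c = j g * u w c.
Proof.
have supp_eg a : u (e g) a != 0 -> a \in [:: 0].
  by rewrite u_Gam; have [->|] := eqVneq a 0; rewrite ?mem_head ?eqxx.
by rewrite (uM w (erefl : uniq [:: 0]) supp_eg) big_seq1 u_Gam eqxx phi0 subr0.
Qed.

Lemma jE g : j g = u (e g) 0.
Proof. by rewrite u_Gam eqxx. Qed.

Lemma j0 : j 0 = 0.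
Proof. by rewrite jE rmorph0 u0. Qed.

Lemma j1 : j 1 = 1.
Proof. by rewrite jE rmorph1 u1 eqxx. Qed.

Lemma jM g h : j (g * h) = j g * j h.
Proof. by rewrite !jE rmorphM u_Gam_mul jE. Qed.

Lemma j_eq0 g : (j g == 0) = (g == 0).
Proof.
apply/eqP/eqP => [jg0|->]; last exact: j0.
apply: e_inj; rewrite rmorph0; apply: u_inj; apply: funext => a.
by rewrite u_Gam u0 jg0; case: eqP.
Qed.

Lemma KU_clear_denoms f : KU (frac_field j) u f ->
  exists d y, j d != 0 /\ forall a, u y a = j d * f a.
Proof.
move=> [ps [psK fE]].
suff [d [y [jd_neq0 Hy]]] : exists d y,
    j d != 0 /\ forall a, u y a = j d * \sum_(p <- ps) p.1 * u p.2 a.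
  by exists d, y; split => // a; rewrite fE.
elim: ps psK {fE} => [|[x w] ps IH] psK.
  exists 1, 0; split; first by rewrite j1 oner_eq0.
  by move=> a; rewrite u0 big_nil mulr0.
have [|d [y [jd_neq0 Hy]]] := IH; first by move=> p ps_p; apply: psK; right.
have [a0 [b0 [jb0_neq0 ->]]] : frac_field j x by apply: (psK (x, w)); left.
exists (b0 * d), (e (a0 * d) * w + e b0 * y); split; first by rewrite jM mulf_neq0.
by move=> a; rewrite uD !u_Gam_mul Hy big_cons /= !jM; field.
Qed.

Section LeadingPoints.
Variable lam : {additive 'rV[int]_n -> int}.

Definition leading (y : U) (P : 'rV[int]_n) :=
  u y P != 0 /\ forall c, u y c != 0 -> c != P -> lam c < lam P.

Lemma leading1 : leading 1 0.
Proof.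
split; first by rewrite u1 eqxx oner_eq0.
by move=> c; rewrite u1; have [->|_] := eqVneq c 0; rewrite ?eqxx.
Qed.

Lemma leadingM y z P Q : leading y P -> leading z Q -> leading (y * z) (P + Q).
Proof.
move=> [yP y_lt] [zQ z_lt]; have [s uniq_s supp_y] := u_supp y.
have uyz c : u (y * z) c = \sum_(a <- s) u y a * phi a (u z (c - a)) by exact: uM.
have term_neq0 c a : u y a * phi a (u z (c - a)) != 0 -> u y a != 0 /\ u z (c - a) != 0.
  by rewrite mulf_eq0 phi_eq0 negb_or => /andP.
have lam_lt c a : u y a != 0 -> u z (c - a) != 0 -> (a != P) || (c - a != Q) ->
    lam c < lam (P + Q).
  move=> ya zca; have -> : lam c = lam a + lam (c - a) by rewrite -raddfD addrC subrK.
  rewrite [lam (P + Q)]raddfD; case/orP => [aP|caQ].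
    apply: ltr_leD; first exact: y_lt.
    by have [->|/(z_lt _ zca)/ltW] := eqVneq (c - a) Q.
  apply: ler_ltD; last exact: z_lt.
  by have [->|/(y_lt _ ya)/ltW] := eqVneq a P.
split.
  rewrite uyz (bigD1_seq P) ?supp_y //= big1 ?addr0.
    by rewrite [P + Q]addrC addrK mulf_neq0 ?phi_eq0.
  move=> a aP; apply/eqP/negPn/negP => /term_neq0[ya zPQa].
  by have := lam_lt _ _ ya zPQa; rewrite aP ltxx => /(_ isT).
move=> c; rewrite uyz => uyz_neq0 cPQ.
have /hasP[a _ /term_neq0[ya zca]] : has (fun a => u y a * phi a (u z (c - a)) != 0) s.
  apply: contraNT uyz_neq0 => /hasPn all0.
  by rewrite big1_seq // => a /all0 /negbNE /eqP.
apply: lam_lt ya zca _; apply: contraNT cPQ; rewrite negb_or !negbK.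
by move=> /andP[/eqP aP /eqP caQ]; rewrite -(subrK a c) caQ aP addrC.
Qed.

Lemma leadingX y P m : leading y P -> leading (y ^+ m) (P *+ m).
Proof.
move=> yP; elim: m => [|m IH]; first by rewrite expr0 mulr0n; exact: leading1.
by rewrite exprS mulrS; apply: leadingM.
Qed.

Lemma leading_prod (I : Type) (r : seq I) (Y : I -> U) (P : I -> 'rV[int]_n) :
  (forall i, leading (Y i) (P i)) -> leading (\prod_(i <- r) Y i) (\sum_(i <- r) P i).
Proof.
move=> YP; elim: r => [|i r IH]; first by rewrite !big_nil; exact: leading1.
by rewrite !big_cons; apply: leadingM.
Qed.

(* Look at the coefficient of the [lam]-largest leading point among the
   nonzero terms: no other term contributes to it. *)
Lemma leading_sum_eq0 (I : finType) (Y : I -> U) (P : I -> 'rV[int]_n) (s : I -> Gam) :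
  (forall r, leading (Y r) (P r)) -> injective P ->
  \sum_r e (s r) * Y r = 0 -> forall r, s r = 0.
Proof.
move=> YP P_inj sY0 r0; apply/eqP/negPn/negP => s_r0.
have [r s_r r_max] := @arg_maxP _ _ I r0 (fun r => s r != 0) (fun r => lam (P r)) s_r0.
have := congr1 (fun y => u y (P r)) sY0; rewrite /= u0 u_sum (bigD1 r) //= big1 ?addr0.
  by rewrite u_Gam_mul; apply/eqP; rewrite mulf_neq0 ?j_eq0 //; case: (YP r).
move=> r' r'r; rewrite u_Gam_mul; have [->|s_r'] := eqVneq (s r') 0; first by rewrite j0 mul0r.
have [->|Y_r'] := eqVneq (u (Y r') (P r)) 0; first by rewrite mulr0.
have Pr'r : P r != P r' by apply: contraNneq r'r => /P_inj ->.
by have := (YP r').2 _ Y_r' Pr'r; rewrite ltNge => /negP /(_ (r_max r' s_r')).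
Qed.

Lemma lin_indep_leading (vs : seq Gam) (I : finType) (Y : I -> U) (P : I -> 'rV[int]_n) :
  lin_indep vs -> (forall r, leading (Y r) (P r)) -> injective P ->
  lin_indep [seq e vs`_x.1 * Y x.2
              | x : ('I_(size vs) * I)%type <- enum {: 'I_(size vs) * I}].
Proof.
move=> vs_indep YP P_inj; apply: lin_indep_fintype => c c_rel [i r].
pose s r := \sum_(i < size vs) c (i, r) *: vs`_i.
have sY0 : \sum_r e (s r) * Y r = 0.
  apply: etrans _ c_rel.
  transitivity (\sum_(i < size vs) \sum_r c (i, r) *: (e vs`_i * Y r)).
    rewrite exchange_big /=; apply: eq_bigr => r' _.
    rewrite linear_sum mulr_suml; apply: eq_bigr => i' _.
    by rewrite linearZ scalerAl.
  by rewrite pair_big /=; apply: eq_bigr => [[i' r']] _.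
pose cs := [seq c (i', r) | i' <- enum 'I_(size vs)].
have size_cs : size cs = size vs by rewrite size_map size_enum_ord.
have cs_vs : \sum_(i < size vs) cs`_i *: vs`_i = 0.
  apply: etrans (leading_sum_eq0 YP P_inj sY0 r).
  by apply: eq_bigr => i' _; rewrite nth_map_ord.
by have := vs_indep cs size_cs cs_vs i (ltn_ord i); rewrite nth_map_ord.
Qed.

Variables (p0 : 'rV[int]_n) (y0 : U) (yl : 'I_n -> U).
Hypothesis lead0 : leading y0 p0.
Hypothesis leadl : forall l, leading (yl l) (p0 + delta_mx 0 l).

Definition monomial m (a : {ffun 'I_n -> 'I_m.+1}) : U :=
  \prod_(l < n) (yl l ^+ a l * y0 ^+ (m - a l)).

Definition monomial_pt m (a : {ffun 'I_n -> 'I_m.+1}) : 'rV[int]_n :=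
  \sum_(l < n) ((p0 + delta_mx 0 l) *+ a l + p0 *+ (m - a l)).

Lemma leading_monomial m a : leading (@monomial m a) (monomial_pt a).
Proof. by apply: leading_prod => l; apply: leadingM; apply: leadingX. Qed.

Lemma monomial_ptE m a :
  @monomial_pt m a = p0 *+ (n * m) + \sum_(l < n) delta_mx 0 l *+ a l.
Proof.
rewrite /monomial_pt mulnC mulrnA -[X in _ *+ X]card_ord -sumr_const -big_split /=.
apply: eq_bigr => l _; rewrite mulrnDl addrAC -mulrnDr subnKC //.
by rewrite -ltnS ltn_ord.
Qed.

Lemma monomial_pt_inj m : injective (@monomial_pt m).
Proof.
move=> a b; rewrite !monomial_ptE => /addrI ab; apply/ffunP => l; apply: val_inj.
have := congr1 (fun v : 'rV[int]_n => v 0 l) ab; rewrite /= !summxE.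
rewrite (bigD1 l) //= [in RHS](bigD1 l) //= !big1 ?addr0.
- by rewrite !mulmxnE !mxE !eqxx /= => /eqP; rewrite eqr_nat => /eqP.
- by move=> i il; rewrite mulmxnE !mxE eq_sym (negbTE il) andbF mul0rn.
- by move=> i il; rewrite mulmxnE !mxE eq_sym (negbTE il) andbF mul0rn.
Qed.

Lemma spow_monomial (W : set U) m a : W y0 -> (forall l, W (yl l)) ->
  spow W (n * m) (@monomial m a).
Proof.
move=> Wy0 Wyl; apply: spow_prod => l.
have := spowM (spowX (a l) (Wyl l)) (spowX (m - a l) Wy0).
by rewrite subnKC // -ltnS ltn_ord.
Qed.

Lemma kdim_spow_growth (sV : seq Gam) (ts : seq U) m :
  (forall v, v \in sV -> e v \in ts) -> y0 \in ts -> (forall l, yl l \in ts) ->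
  exists d D : nat,
    [/\ kdim R (spow (kspan [set y | y \in sV]) m) = d%:R%:E,
        kdim R (spow (spow (kspan [set y | y \in ts]) n.+1) m) = D%:R%:E
      & (d * m.+1 ^ n <= D)%N].
Proof.
move=> sV_ts ts_y0 ts_yl.
set V := kspan [set y | y \in sV]; set W := kspan [set y | y \in ts].
have [|vs [vs_indep vsV ->]] := @kdim_spanned _ _ R (spow V m) (word_prods sV m).
  by move=> x; rewrite /V spow_span_seq.
have [|ws [ws_indep wsW kdimW]] :=
    @kdim_spanned _ _ R (spow (spow W n.+1) m) (word_prods (word_prods ts n.+1) m).
  by move=> x; rewrite /W !spow_span_seq.
exists (size vs), (size ws); split => //.
have fam_indep := lin_indep_leading vs_indep (@leading_monomial m) (@monomial_pt_inj m).
have VW x : V x -> W (e x) by apply: kspan_lrmorph => v /sV_ts.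
have fam_W w : w \in [seq e vs`_x.1 * monomial x.2
    | x : ('I_(size vs) * {ffun 'I_n -> 'I_m.+1})%type <- enum {: 'I_(size vs) * _}] ->
    spow (spow W n.+1) m w.
  move=> /mapP[[i a] _ ->] /=; apply: spow_spow; rewrite mulSn; apply: spowM.
    by apply: spow_lrmorph VW _ _; apply: vsV; exact: mem_nth.
  by apply: spow_monomial => [|l]; apply: kspan_base; [exact: ts_y0|exact: ts_yl].
have := kdim_ge R fam_indep fam_W.
by rewrite kdimW lee_fin ler_nat size_map -cardE card_prod card_ffun !card_ord.
Qed.

Lemma GKdim_addn_le : (GKdim Gam R + n%:R%:E <= GKdim U R)%E.
Proof.
apply: ereal_sup_addr_le => _ [V [[sV ->] V1] <-].
pose ts := map e sV ++ y0 :: [seq yl l | l <- enum 'I_n].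
have sV_ts v : v \in sV -> e v \in ts by move=> sV_v; rewrite mem_cat map_f.
have ts_y0 : y0 \in ts by rewrite mem_cat in_cons eqxx orbT.
have ts_yl l : yl l \in ts by rewrite mem_cat in_cons map_f ?orbT ?mem_enum.
pose W := spow (kspan [set y | y \in ts]) n.+1.
have W_fd : fd_sub1 W.
  split; first by exists (word_prods ts n.+1); rewrite /W spow_span_seq.
  by apply: spow_one; rewrite -(rmorph1 e); apply: kspan_lrmorph V1 => v /sV_ts.
apply: le_trans (ereal_sup_ubound _); last by exists W.
apply: (@limn_esup_addr_le _ _ _ _ 2) => m m_ge2.
have := kdim_ge1 R (spow_one m V1).
have [d [D [-> -> dD]]] := kdim_spow_growth m sV_ts ts_y0 ts_yl.
rewrite /= lee_fin ler1n -EFinD lee_fin => d_gt0.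
exact: ln_ratio_addn.
Qed.

End LeadingPoints.

Hypothesis phiD : forall a b x, phi (a + b) x = phi a (phi b x).
Hypothesis phi_sep : forall a b, (forall x, frac_field j x -> phi a x = phi b x) -> a = b.
Hypothesis G_M : forall g, galK (frac_field j) g -> forall a,
  exists b, forall x, phi b (g x) = g (phi a x).
Hypothesis KU_eq : forall f, KU (frac_field j) u f <-> Kcal phi (frac_field j) f.

Local Notation K := (frac_field j).

(* The action of [G] on [Z^n] by conjugation, [phi (act g a) = g \o phi a \o g^-1];
   outside [G] we take the identity, so that every [act g] is additive. *)
Definition act (g : L -> L) (a : 'rV[int]_n) : 'rV[int]_n :=
  if pselect (galK K g) is left Gg then sval (cid (G_M Gg a)) else a.

Lemma act_spec g a : galK K g -> forall x, phi (act g a) (g x) = g (phi a x).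
Proof. by rewrite /act; case: pselect => [Gg _|nGg /nGg []]; exact: (svalP (cid (G_M Gg a))). Qed.

Lemma act_uniq g a b : galK K g -> (forall x, phi b (g x) = g (phi a x)) -> act g a = b.
Proof.
move=> Gg gab; apply: phi_sep => x _; have [[_ _ _ [g' _ gK']] _] := Gg.
by rewrite -[x]gK' act_spec // gab.
Qed.

Lemma actD g a b : act g (a + b) = act g a + act g b.
Proof.
case: (pselect (galK K g)) => Gg; last by rewrite /act; case: pselect.
by apply: act_uniq => // x; rewrite !phiD !act_spec.
Qed.

Fact act_is_zmod_morphism g : zmod_morphism (act g).
Proof. by move=> a b; apply/eqP; rewrite eq_sym subr_eq -actD subrK. Qed.

HB.instance Definition _ g := GRing.isZmodMorphism.Build _ _ (act g) (act_is_zmod_morphism g).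

Lemma act_id a : act id a = a.
Proof. by apply: act_uniq => //; exact: galK_id. Qed.

Lemma act_comp g h a : galK K g -> galK K h -> act (g \o h) a = act g (act h a).
Proof.
move=> Gg Gh; apply: act_uniq; first exact: galK_comp.
by move=> x /=; rewrite !act_spec.
Qed.

Lemma act_eqfun g h a : galK K g -> g =1 h -> act g a = act h a.
Proof.
move=> Gg gh; apply/esym/act_uniq; first exact: galK_eqfun Gg gh.
by move=> x; rewrite -!gh act_spec.
Qed.

Lemma act_can g h a : galK K g -> galK K h -> cancel h g -> act g (act h a) = a.
Proof. by move=> Gg Gh hK; rewrite -act_comp // (act_eqfun _ (galK_comp Gg Gh) hK) act_id. Qed.

Section FiniteGroup.
Variable gs : seq (L -> L).
Hypothesis gsG : forall g, galK K g -> exists2 g', List.In g' gs & g =1 g'.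

Definition gal_at (i : 'I_(size gs)) : L -> L := nth id gs i.

Lemma gal_atP g : galK K g -> exists2 i, galK K (gal_at i) & act (gal_at i) =1 act g.
Proof.
move=> Gg; have [g' /(List_In_nth id)[i lt_i_gs gs_i] gg'] := gsG Gg.
have Gi : galK K (gal_at (Ordinal lt_i_gs)) by apply: galK_eqfun Gg _ => x; rewrite /gal_at gs_i.
by exists (Ordinal lt_i_gs) => // a; apply: act_eqfun => // x; rewrite /gal_at /= gs_i.
Qed.

Definition orbit_ind (p c : 'rV[int]_n) : L :=
  if `[< exists2 g, galK K g & c = act g p >] then 1 else 0.

Lemma orbit_ind_Kcal p : Kcal phi K (orbit_ind p).
Proof.
split.
  exists [seq act (gal_at i) p | i <- enum 'I_(size gs)] => c.
  rewrite /orbit_ind; case: asboolP => [[g Gg ->] _|]; last by rewrite eqxx.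
  by have [i _ gi] := gal_atP Gg; apply/mapP; exists i; rewrite ?mem_enum // gi.
move=> g Gg a b gab; rewrite -(act_uniq Gg gab).
have [g' [Gg' gK' Kg']] := galK_inv Gg.
have orbit_act : (exists2 h, galK K h & act g a = act h p) <-> (exists2 h, galK K h & a = act h p).
  split=> [[h Gh gah]|[h Gh ->]].
    by exists (g' \o h); rewrite ?(act_comp p Gg' Gh) -?gah ?act_can //; exact: galK_comp.
  by exists (g \o h); rewrite ?(act_comp p Gg Gh) //; exact: galK_comp.
rewrite /orbit_ind; case: asboolP => [/orbit_act ahp|nahp]; case: asboolP => //.
- by rewrite (galK_1 Gg).
- by move=> /orbit_act.
by rewrite (galK_0 Gg).
Qed.

Definition orbit_top (lam : {additive 'rV[int]_n -> int}) p :=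
  forall g, galK K g -> act g p != p -> lam (act g p) < lam p.

Lemma exists_leading lam p : orbit_top lam p -> exists y, leading lam y p.
Proof.
move=> p_max; have [d [y [jd_neq0 yE]]] := KU_clear_denoms ((KU_eq _).2 (orbit_ind_Kcal p)).
exists y; split.
  rewrite yE /orbit_ind; case: asboolP => [_|]; first by rewrite mulr1.
  by case; exists id; rewrite ?act_id //; exact: galK_id.
move=> c; rewrite yE /orbit_ind; case: asboolP => [[g Gg ->] _|_]; first exact: p_max.
by rewrite mulr0 eqxx.
Qed.

(* Take a common nonvanishing point of the finitely many nonzero additive maps
   [act g - act h]. *)
Lemma exists_faithful_point : exists b, forall g h, galK K g -> galK K h ->
  act g b = act h b -> act g =1 act h.
Proof.
pose D (ih : 'I_(size gs) * 'I_(size gs)) : {additive 'rV[int]_n -> 'rV[int]_n} :=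
  act (gal_at ih.1) \- act (gal_at ih.2).
have [t Dt] := exists_powers_row_neq0 D.
exists (powers_row n t) => g h Gg Gh gh_t x.
have [i1 Gi1 i1g] := gal_atP Gg; have [i2 Gi2 i2h] := gal_atP Gh.
have : D (i1, i2) (powers_row n t) == 0 by rewrite /= i1g i2h gh_t subrr.
apply: contraTeq => ghx; apply: Dt; exists x.
by rewrite /= i1g i2h subr_eq0.
Qed.

(* Take [lam] injective on the orbit of a faithful point and [b] the
   [lam]-largest point of that orbit. *)
Lemma exists_lead_point : exists (lam : {additive 'rV[int]_n -> int}) b,
  orbit_top lam b /\ forall g, galK K g -> act g b = b -> act g =1 id.
Proof.
have [b0 b0_faithful] := exists_faithful_point.
pose orbit := [seq act (gal_at i) b0 | i <- enum 'I_(size gs)].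
have orbitP g : galK K g -> act g b0 \in orbit.
  by move=> /gal_atP[i _ <-]; apply: map_f; rewrite mem_enum.
have [s s_inj] := exists_moment_inj orbit.
have [i0 Gi0 _] := gal_atP (galK_id K).
have [im /asboolP Gim im_max] := @arg_maxP _ _ _ i0 (fun i => `[< galK K (gal_at i) >])
  (fun i => moment s (act (gal_at i) b0)) (asboolT Gi0).
exists (moment s), (act (gal_at im) b0); split=> g Gg.
  have Ggim := galK_comp Gg Gim; rewrite -(act_comp _ Gg Gim) => g_b.
  rewrite lt_neqAle; apply/andP; split.
    by apply: contra g_b => /eqP /s_inj -> //; apply: orbitP.
  by have [i Gi <-] := gal_atP Ggim; apply: im_max; apply/asboolP.
move=> g_b x; have [h [Gh gimK hK]] := galK_inv Gim.
have := b0_faithful _ _ (galK_comp Gg Gim) Gim; rewrite act_comp // g_b => /(_ erefl) gimE.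
by rewrite -[x in act g x](act_can _ Gim Gh hK) -act_comp // gimE act_can.
Qed.

(* Scaling [b] by [N] pushes every moved point of its orbit [N] steps below
   it, more than any [act g] can shift a unit vector. *)
Lemma exists_lead_points : exists (lam : {additive 'rV[int]_n -> int}) p0,
  orbit_top lam p0 /\ forall l, orbit_top lam (p0 + delta_mx 0 l).
Proof.
have [lam [b [b_top b_fix]]] := exists_lead_point.
pose dev (q : 'I_(size gs) * 'I_n) :=
  absz (lam (act (gal_at q.1) (delta_mx 0%R q.2)) - lam (delta_mx 0%R q.2)).
pose N := (\max_(q | `[< galK K (gal_at q.1) >]) dev q).+1.
have ltMn (x y : int) : x < y -> x *+ N < y *+ N by nia.
have ltMnD (x y z w : int) : x < y -> (`|z - w| < N)%N -> x *+ N + z < y *+ N + w by nia.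
exists lam, (b *+ N); split=> [g Gg|l g Gg].
  rewrite (raddfMn (act g)) /=; have [gb|gb] := eqVneq (act g b) b; first by rewrite gb eqxx.
  by move=> _; rewrite !(raddfMn lam); apply: ltMn; apply: b_top.
rewrite (raddfD (act g)) (raddfMn (act g)) /=; have [gb|gb] := eqVneq (act g b) b.
  by rewrite gb (b_fix g Gg gb) eqxx.
move=> _; rewrite !(raddfD lam) !(raddfMn lam); apply: ltMnD; first exact: b_top.
have [i Gi <-] := gal_atP Gg; rewrite ltnS.
by apply: (leq_bigmax_cond (i, l)); apply/asboolP.
Qed.

End FiniteGroup.

Lemma exists_leading_frame : (exists gs : seq (L -> L), forall g, galK K g ->
    exists2 g', List.In g' gs & g =1 g') ->
  exists (lam : {additive 'rV[int]_n -> int}) p0 y0 (yl : 'I_n -> U),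
    leading lam y0 p0 /\ forall l, leading lam (yl l) (p0 + delta_mx 0 l).
Proof.
move=> [gs gsG]; have [lam [p0 [top0 topl]]] := exists_lead_points gsG.
have [y0 lead0] := exists_leading gsG top0.
have [yl leadl] := choice (fun l => exists_leading gsG (topl l)).
by exists lam, p0, y0, yl.
Qed.

End GaloisAlgebra.

Theorem proposition5p5
  (R : realType) (k : closedFieldType) (chark0 : [pchar k] =i pred0)
  (L : fieldType) (iota : {rmorphism k -> L})
  (n : nat) (phi : 'rV[int]_n -> L -> L)
  (Gam : comAlgType k) (U : algType k) (e : {lrmorphism Gam -> U})
  (u : U -> 'rV[int]_n -> L) (j : Gam -> L)
  (* Gamma : finitely generated commutative k-domain *)
  (Gam_nontriv : (1 : Gam) != 0)
  (Gam_dom : forall x y : Gam, x * y = 0 -> x = 0 \/ y = 0)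
  (Gam_fg : exists s : seq Gam, forall x, subalg_gen [set y | y \in s] x)
  (* Gamma subset U, U finitely generated over Gamma *)
  (e_inj : injective e)
  (U_fg : exists s : seq U,
      forall x, subalg_gen (fun y => y \in s \/ exists g, y = e g) x)
  (* M = phi(Z^n) : a monoid of k-automorphisms of L isomorphic to Z^n *)
  (phi_aut : forall a, is_ring_aut (phi a))
  (phi_k : forall a c, phi a (iota c) = iota c)
  (phi0 : forall x, phi 0 x = x)
  (phiD : forall a b x, phi (a + b) x = phi a (phi b x))
  (* separating property, K = Frac Gamma *)
  (phi_sep : forall a b, (forall x, frac_field j x -> phi a x = phi b x) -> a = b)
  (* L / K finite Galois with group G = Gal(L/K) *)
  (G_fin : exists gs : seq (L -> L), forall g, galK (frac_field j) g ->
      exists2 g', List.In g' gs & g =1 g')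
  (G_fix : forall x, (forall g, galK (frac_field j) g -> g x = x) -> frac_field j x)
  (* G acts on M by conjugation *)
  (G_M : forall g, galK (frac_field j) g -> forall a,
      exists b, forall x, phi b (g x) = g (phi a x))
  (* u : embedding of k-algebras U -> L*M *)
  (u_inj : injective u)
  (u_fin : forall v, fin_supp (u v))
  (u1 : forall a, u 1 a = if a == 0 then 1 else 0)
  (uD : forall v w a, u (v + w) a = u v a + u w a)
  (uZ : forall (c : k) v a, u (c *: v) a = iota c * u v a)
  (uM : forall v w (s : seq 'rV[int]_n), uniq s ->
      (forall a, u v a != 0 -> a \in s) ->
      forall c, u (v * w) c = \sum_(a <- s) u v a * phi a (u w (c - a)))
  (* the embedding restricted to Gamma is Gamma ⊂ K ⊂ L ⊂ L*M *)
  (u_Gam : forall g a, u (e g) a = if a == 0 then j g else 0)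
  (* KU = UK = (L*M)^G *)
  (KU_eq : forall f, KU (frac_field j) u f <-> Kcal phi (frac_field j) f)
  (UK_eq : forall f, UK phi (frac_field j) u f <-> Kcal phi (frac_field j) f) :
  (GKdim U R >= GKdim Gam R + (n%:R)%:E)%E.
Proof.
have [lam [p0 [y0 [yl [lead0 leadl]]]]] :=
  exists_leading_frame phi0 u1 uD uM u_Gam phiD phi_sep G_M KU_eq G_fin.
exact: (GKdim_addn_le R e_inj phi_aut phi0 u_inj u_fin u1 uD uM u_Gam lead0 leadl).
Qed.
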